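(* Let $G$ be a finite simple connected graph on $n$ vertices and $m$ a positive integer such that for every set $S$ of at most $m$ vertices, the graph $G-\overline N(S)$ has a connected component with more than $n/2$ vertices. Then $c_{\infty}(G)>m$.
   Context: $N(S)$ is the set of vertices with a neighbour in $S$, $\overline N(S)=S\cup N(S)$, and $G-A$ is the subgraph induced by $V(G)\setminus A$. Cops and Robber with an infinitely fast robber: the game is played on a graph $G$. A set of cops first choose initial vertices (several cops may share a vertex); then the robber, knowing their positions, chooses a vertex. Then the players move in alternating rounds, cops first. In the cops' turn each cop either stays or moves to an adjacent vertex; in the robber's turn she either stays or moves along any path of $G$ starting at her current vertex that contains no vertex currently occupied by a cop. The cops win if at some point a cop moves to the vertex occupied by the robber. $c_{\infty}(G)$ is the minimum number of cops for which the cops have a strategy that guarantees a win. *)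

From mathcomp Require Import all_boot.
Set Implicit Arguments. Unset Strict Implicit. Unset Printing Implicit Defensive.

Section CopsRobber.
Variables (T : finType) (e : rel T).

Definition simple_graph : Prop := symmetric e /\ irreflexive e.
Definition connected_graph : Prop := forall x y : T, connect e x y.

Definition cnbhd (S : {set T}) : {set T} :=
  S :|: [set y | [exists x in S, e x y]].

Definition rel_minus (A : {set T}) : rel T :=
  [rel x y | [&& e x y, x \notin A & y \notin A]].

(* the connected component of v in G - A (for v \notin A) *)
Definition comp_minus (A : {set T}) (v : T) : {set T} :=
  [set w | connect (rel_minus A) v w].

Definition has_big_component (A : {set T}) : Prop :=
  exists2 v, v \notin A & (#|T| < 2 * #|comp_minus A v|)%N.

Definition cops (k : nat) := {ffun 'I_k -> T}.
Definition occupied k (c : cops k) : {set T} := [set c i | i : 'I_k].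

(* A deterministic cop strategy: given the sequence of robber positions
   r_0, ..., r_{t-1} (after each robber turn), it returns the cop positions at
   time t; [sigma [::]] is the initial placement. *)
Definition cop_strategy (k : nat) := seq T -> cops k.

Definition legal_cop_move k (c c' : cops k) : Prop :=
  forall i, c' i = c i \/ e (c i) (c' i).

Definition legal_strategy k (sigma : cop_strategy k) : Prop :=
  forall (s : seq T) (x : T), legal_cop_move (sigma s) (sigma (rcons s x)).

Definition cops_at k (sigma : cop_strategy k) (r : nat -> T) (t : nat) : cops k :=
  sigma [seq r i | i <- iota 0 t].

Definition robber_step (O : {set T}) (x y : T) : bool :=
  connect [rel a b | e a b && (b \notin O)] x y.

(* r is a legal robber play against sigma: r 0 is her initial choice (an
   unoccupied vertex), r (t+1) her position after the robber turn of round t+1.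
   Cops capture in round t+1 iff r t is occupied by the cops at time t+1;
   as long as no capture happened, robber moves are legal. *)
Definition captured k (sigma : cop_strategy k) (r : nat -> T) (t : nat) : bool :=
  r t \in occupied (cops_at sigma r t.+1).

Definition legal_robber_play k (sigma : cop_strategy k) (r : nat -> T) : Prop :=
  r 0 \notin occupied (sigma [::]) /\
  forall t, ~~ captured sigma r t ->
    robber_step (occupied (cops_at sigma r t.+1)) (r t) (r t.+1).

Definition cops_win (k : nat) : Prop :=
  exists sigma : cop_strategy k, legal_strategy sigma /\
    forall r : nat -> T, legal_robber_play sigma r -> exists t, captured sigma r t.

Definition cinf_gt (m : nat) : Prop := forall k, (k <= m)%N -> ~ cops_win k.

End CopsRobber.

From mathcomp Require Import all_boot.
From mathcomp Require Import zify.
Set Implicit Arguments. Unset Strict Implicit.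

(* The robber, knowing the cops' deterministic strategy, always stays in a
   component B_t of G - N̄(C_t) with more than n/2 vertices, C_t being the set
   of occupied vertices.  The next cop set C_(t+1) lies inside N̄(C_t), so it
   avoids B_t and cannot capture her; and B_t meets B_(t+1), both being
   majorities, so she can run inside B_t (free of cops) to a vertex of B_(t+1). *)

Section Components.
Variables (T : finType) (e : rel T).

Lemma comp_minus_notin (A : {set T}) v w :
  v \notin A -> w \in comp_minus e A v -> w \notin A.
Proof.
rewrite inE => vA /connectP [p vp ->]; move: vp.
elim/last_ind: p => [|p y _] //=.
by rewrite rcons_path last_rcons => /andP[_ /and3P[_ _ ->]].
Qed.

Lemma rel_minus_sym (A : {set T}) : symmetric e -> symmetric (rel_minus e A).
Proof. by move=> esym x y; rewrite /rel_minus /= esym; case: (x \in A); case: (y \in A); rewrite ?andbF. Qed.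

Lemma comp_minus_connect (A : {set T}) v x y : symmetric e ->
  x \in comp_minus e A v -> y \in comp_minus e A v -> connect (rel_minus e A) x y.
Proof.
move=> esym; rewrite !inE => vx vy.
by apply: connect_trans vy; rewrite (sym_connect_sym (rel_minus_sym A esym)).
Qed.

Lemma robber_step_connect_minus (O A : {set T}) x y : O \subset A ->
  connect (rel_minus e A) x y -> robber_step e O x y.
Proof.
move=> OA; apply: connect_sub => a b /and3P[ab _ bA]; apply: connect1.
by rewrite /= ab; apply: contra bA; apply/subsetP.
Qed.

Lemma majorities_meet (X Y : {set T}) :
  (#|T| < 2 * #|X|)%N -> (#|T| < 2 * #|Y|)%N -> X :&: Y != set0.
Proof.
move=> bigX bigY; apply/negP => /eqP XY0.
have := cardsUI X Y; rewrite XY0 cards0 addn0.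
have := subset_leq_card (subsetT (X :|: Y)); rewrite cardsT; lia.
Qed.

Lemma card_occupied k (c : cops T k) : (#|occupied c| <= k)%N.
Proof. by rewrite -[k in (_ <= k)%N]card_ord leq_imset_card. Qed.

Lemma occupied_legal_move k (c c' : cops T k) :
  legal_cop_move e c c' -> occupied c' \subset cnbhd e (occupied c).
Proof.
move=> cc'; apply/subsetP => _ /imsetP[i _ ->]; rewrite !inE.
case: (cc' i) => [->|ci]; first by rewrite imset_f.
by apply/orP; right; apply/existsP; exists (c i); rewrite imset_f.
Qed.

End Components.

Section Evader.
Variables (T : finType) (e : rel T) (x0 : T).
Hypothesis esym : symmetric e.
Variables (k : nat) (sigma : cop_strategy T k).
Hypothesis sigma_legal : legal_strategy e sigma.
Hypothesis big_comp : forall c : cops T k, has_big_component e (cnbhd e (occupied c)).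

Definition safe_root (c : cops T k) : T :=
  let A := cnbhd e (occupied c) in
  odflt x0 [pick v | (v \notin A) && (#|T| < 2 * #|comp_minus e A v|)%N].

Definition safe_comp (c : cops T k) : {set T} :=
  comp_minus e (cnbhd e (occupied c)) (safe_root c).

Lemma safe_rootP c : safe_root c \notin cnbhd e (occupied c) /\
  (#|T| < 2 * #|safe_comp c|)%N.
Proof.
rewrite /safe_comp /safe_root; case: pickP => [v /andP[] //|none].
by have [v vA vbig] := big_comp c; move: (none v); rewrite vA vbig.
Qed.

Lemma safe_comp_big c : (#|T| < 2 * #|safe_comp c|)%N.
Proof. exact: (safe_rootP c).2. Qed.

Lemma safe_comp_notin c w : w \in safe_comp c -> w \notin cnbhd e (occupied c).
Proof. exact: comp_minus_notin (safe_rootP c).1. Qed.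

Definition meet_pick (X Y : {set T}) : T := odflt x0 [pick w in X :&: Y].

Lemma meet_pick_in (X Y : {set T}) : (#|T| < 2 * #|X|)%N -> (#|T| < 2 * #|Y|)%N ->
  meet_pick X Y \in X :&: Y.
Proof.
move=> bigX bigY; rewrite /meet_pick; case: pickP => [w //|none].
by have /set0Pn[w XYw] := majorities_meet bigX bigY; move: (none w); rewrite XYw.
Qed.

Definition zone (h : seq T) : {set T} := safe_comp (sigma h).

(* [play t] is the pair (r_0, ..., r_(t-1); r_t) of the robber's history and
   current position. *)
Fixpoint play (t : nat) : seq T * T :=
  if t is t'.+1 then
    let h := rcons (play t').1 (play t').2 in (h, meet_pick (zone (play t').1) (zone h))
  else ([::], meet_pick (zone [::]) (zone [::])).

Definition evader (t : nat) : T := (play t).2.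

Lemma play_history t : [seq evader i | i <- iota 0 t] = (play t).1.
Proof. by elim: t => [|t IH] //; rewrite -addn1 iotaD map_cat IH /= cats1 add0n addn1. Qed.

Lemma cops_at_evader t : cops_at sigma evader t = sigma (play t).1.
Proof. by rewrite /cops_at play_history. Qed.

Lemma evader_next_in_zones t :
  evader t.+1 \in zone (play t).1 :&: zone (play t.+1).1.
Proof. exact: meet_pick_in (safe_comp_big _) (safe_comp_big _). Qed.

Lemma evader_in_zone t : evader t \in zone (play t).1.
Proof.
case: t => [|t]; last by have := evader_next_in_zones t; rewrite inE => /andP[].
by have := meet_pick_in (safe_comp_big (sigma [::])) (safe_comp_big (sigma [::]));
  rewrite setIid.
Qed.

Lemma next_cops_sub t :
  occupied (sigma (play t.+1).1) \subset cnbhd e (occupied (sigma (play t).1)).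
Proof. exact/occupied_legal_move/sigma_legal. Qed.

Lemma evader_not_captured t : ~~ captured sigma evader t.
Proof.
rewrite /captured cops_at_evader; apply: contra (safe_comp_notin (evader_in_zone t)).
exact/subsetP/next_cops_sub.
Qed.

Lemma evader_legal : legal_robber_play e sigma evader.
Proof.
split=> [|t _].
  by apply: contra (safe_comp_notin (evader_in_zone 0)); rewrite /cnbhd inE => ->.
rewrite cops_at_evader.
apply: robber_step_connect_minus (next_cops_sub t) _.
move: (evader_next_in_zones t); rewrite inE => /andP[next_in _].
exact: comp_minus_connect esym (evader_in_zone t) next_in.
Qed.

End Evader.

Theorem mainTheorem12 (T : finType) (e : rel T) (m : nat) :
  simple_graph e -> connected_graph e -> (0 < m)%N ->
  (forall S : {set T}, (#|S| <= m)%N -> has_big_component e (cnbhd e S)) ->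
  cinf_gt e m.
Proof.
move=> [esym _] _ _ big k km [sigma [sigma_legal sigma_wins]].
have [x0 _ _] : has_big_component e (cnbhd e set0) by apply: big; rewrite cards0.
have big_comp (c : cops T k) : has_big_component e (cnbhd e (occupied c)).
  exact/big/(leq_trans (card_occupied c) km).
have [t] := sigma_wins _ (evader_legal x0 esym sigma_legal big_comp).
by rewrite (negbTE (evader_not_captured x0 sigma_legal big_comp t)).
Qed.
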